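(* Let $X,Y$ be finite sets, $\mu\in\mathcal P(X)$, $\nu\in\mathcal P(Y)$, $c\in\mathbb R_+^{X\times Y}$, $\varepsilon>0$. Let $\{X_i\}_{i=1}^R$, $\{Y_i\}_{i=1}^R$ be partitions of $X$ and $Y$ with $\mu(X_i)=\nu(Y_i)$ for all $i$, and $y_i\in Y_i$ for $i=1,\dots,R$. Let $(\alpha^\dagger,\beta^\dagger)$ be a maximizer of the dual entropic OT functional $J_\varepsilon$. Define $d\in\mathbb R^{R\times R}$ by $$d(i,j)=-\varepsilon\log\Big(\sum_{x\in X_i,\,y\in Y_j}\exp\Big(-\tfrac1\varepsilon\big[c(x,y)-\alpha^\dagger(x)-\beta^\dagger(y_i)-\beta^\dagger(y)+\beta^\dagger(y_j)\big]\Big)\mu(x)\nu(y)\Big),$$ and $\hat J:\mathbb R^R\to\mathbb R$, $\hat J(\hat\beta)=-\varepsilon\sum_{i,j=1}^R\exp\big(-\tfrac1\varepsilon[d(i,j)+\hat\beta(i)-\hat\beta(j)]\big)$. Then $\hat\beta^\dagger\in\mathbb R^R$, $\hat\beta^\dagger(i)=\beta^\dagger(y_i)$, is a maximizer of $\hat J$, and conversely every maximizer $\hat\beta^{\dagger\dagger}$ of $\hat J$ satisfies $\hat\beta^{\dagger\dagger}=\hat\beta^\dagger+b$ for some constant $b\in\mathbb R$.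
   Context: $J_\varepsilon(\alpha,\beta)=\langle\alpha,\mu\rangle+\langle\beta,\nu\rangle-\varepsilon\sum_{x,y}K(x,y)\big(\exp((\alpha(x)+\beta(y))/\varepsilon)-1\big)$ with $K(x,y)=\exp(-c(x,y)/\varepsilon)\mu(x)\nu(y)$. $\mu(A)=\sum_{x\in A}\mu(x)$. *)

From mathcomp Require Import all_boot all_order all_algebra.
From mathcomp Require Import all_classical all_reals.
From mathcomp Require Import sequences exp.
Set Implicit Arguments. Unset Strict Implicit. Unset Printing Implicit Defensive.
Import Order.TTheory GRing.Theory Num.Theory.
Local Open Scope ring_scope.

Section EOT.
Variables (R : realType) (X Y : finType).

Definition Kern (eps : R) (c : X -> Y -> R) (mu : X -> R) (nu : Y -> R)
  (x : X) (y : Y) : R := expR (- c x y / eps) * mu x * nu y.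

Definition Jeps (eps : R) (c : X -> Y -> R) (mu : X -> R) (nu : Y -> R)
  (alpha : X -> R) (beta : Y -> R) : R :=
  \sum_x alpha x * mu x + \sum_y beta y * nu y
  - eps * \sum_x \sum_y Kern eps c mu nu x y
                    * (expR ((alpha x + beta y) / eps) - 1).

Definition mass (T : finType) (m : T -> R) (A : pred T) : R :=
  \sum_(t | A t) m t.

(* reduced cost d(i,j); the partitions are given by the labelling maps
   pX : X -> 'I_Rn, pY : Y -> 'I_Rn, i.e. X_i = pX^-1(i), Y_j = pY^-1(j). *)
Definition dred (Rn : nat) (eps : R) (c : X -> Y -> R) (mu : X -> R)
  (nu : Y -> R) (pX : X -> 'I_Rn) (pY : Y -> 'I_Rn) (yr : 'I_Rn -> Y)
  (alpha : X -> R) (beta : Y -> R) (i j : 'I_Rn) : R :=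
  - eps * ln (\sum_(x | pX x == i) \sum_(y | pY y == j)
      expR (- (c x y - alpha x - beta (yr i) - beta y + beta (yr j)) / eps)
        * mu x * nu y).

Definition Jhat (Rn : nat) (eps : R) (d : 'I_Rn -> 'I_Rn -> R)
  (bh : 'I_Rn -> R) : R :=
  - eps * \sum_i \sum_j expR (- (d i j + bh i - bh j) / eps).

End EOT.

From mathcomp Require Import all_boot all_order all_algebra.
From mathcomp Require Import all_classical all_reals.
From mathcomp Require Import sequences exp.
From mathcomp Require Import ring lra.
Set Implicit Arguments. Unset Strict Implicit. Unset Printing Implicit Defensive.
Import Order.TTheory GRing.Theory Num.Theory.
Local Open Scope ring_scope.

(* Tilting alpha by eps s on a block X_i only changes J_eps by
   eps (s mu(X_i) - (e^s - 1) pi(X_i x Y)), where pi = K exp((alpha + beta)/eps)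
   is the entropic plan; maximality for every s forces pi(X_i x Y) = mu(X_i),
   and symmetrically pi(X x Y_j) = nu(Y_j).  Hence the block masses
   M(i,j) = pi(X_i x Y_j) are positive with equal row and column sums, and
   unfolding d gives \hat J(b) = - eps sum_ij M(i,j) exp(g_i - g_j) with
   g = (\hat beta^dagger - b) / eps.  Equal row and column sums make
   sum_ij M(i,j) (g_i - g_j) vanish, so by e^z >= 1 + z the sum is at least
   sum_ij M(i,j), with equality exactly when g is constant. *)

Lemma expR_tilt_eq (R : realType) (m A : R) : 0 < m -> 0 <= A ->
  (forall s, s * m <= (expR s - 1) * A) -> A = m.
Proof.
move=> m_gt0 A_ge0 tilt.
have A_gt0 : 0 < A.
  rewrite lt0r A_ge0 andbT; apply: contraTneq (tilt 1) => ->.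
  by rewrite mulr0 mul1r -ltNge.
set s := ln (m / A).
have es : expR s = m / A by rewrite lnK // posrE divr_gt0.
have le_s : s * m <= m - A.
  by have := tilt s; rewrite es mulrBl mul1r divfK ?gt_eqF.
have s0 : s = 0.
  apply/eqP; apply: contraTT le_s => /negPf s_neq0; rewrite -ltNge.
  have := @expR_gt1Dx _ (- s); rewrite oppr_eq0 s_neq0 expRN es invf_div => /(_ isT).
  rewrite -(ltr_pM2l m_gt0) mulrCA divff ?gt_eqF // mulr1; lra.
by rewrite -[RHS](divfK (lt0r_neq0 A_gt0)) -es s0 expR0 mul1r.
Qed.

Lemma expR_eq1Dx (R : realType) (z : R) : expR z = 1 + z -> z = 0.
Proof. by move=> ez; apply/eqP/negP => /negP /expR_gt1Dx; lra. Qed.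

Lemma psumr_gt0 (R : numDomainType) (I : finType) (P : pred I) (F : I -> R) i :
  (forall j, P j -> 0 <= F j) -> P i -> 0 < F i -> 0 < \sum_(j | P j) F j.
Proof.
move=> F_ge0 Pi Fi_gt0; rewrite lt0r sumr_ge0 // andbT psumr_neq0 //.
by apply/hasP; exists i; rewrite ?mem_index_enum ?Pi.
Qed.

Section DualMarginals.
Variables (R : realType) (X Y : finType) (eps : R) (c : X -> Y -> R).
Variables (mu : X -> R) (nu : Y -> R).

Definition plan (alpha : X -> R) (beta : Y -> R) (x : X) (y : Y) : R :=
  Kern eps c mu nu x y * expR ((alpha x + beta y) / eps).

Hypothesis eps_gt0 : 0 < eps.
Hypothesis mu_ge0 : forall x, 0 <= mu x.
Hypothesis nu_ge0 : forall y, 0 <= nu y.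

Lemma plan_ge0 alpha beta x y : 0 <= plan alpha beta x y.
Proof. by rewrite /plan /Kern !mulr_ge0 ?expR_ge0. Qed.

Lemma plan_gt0 alpha beta x y : 0 < mu x -> 0 < nu y -> 0 < plan alpha beta x y.
Proof. by move=> mux nuy; rewrite /plan /Kern !mulr_gt0 ?expR_gt0. Qed.

Lemma Jeps_tilt alpha beta (A : pred X) s :
  Jeps eps c mu nu (fun x => alpha x + (if A x then eps * s else 0)) beta
  = Jeps eps c mu nu alpha beta
    + eps * (s * mass mu A - (expR s - 1) * \sum_(x | A x) \sum_y plan alpha beta x y).
Proof.
have eps_neq0 : eps != 0 by rewrite gt_eqF.
rewrite /Jeps /mass.
have linear_part : \sum_x (alpha x + (if A x then eps * s else 0)) * mu x
    = \sum_x alpha x * mu x + eps * s * \sum_(x | A x) mu x.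
  rewrite [Z in _ = _ + _ * Z]big_mkcond mulr_sumr -big_split.
  by apply: eq_bigr => x _ /=; case: (A x); ring.
have kernel_part : \sum_x \sum_y Kern eps c mu nu x y
      * (expR ((alpha x + (if A x then eps * s else 0) + beta y) / eps) - 1)
    = \sum_x \sum_y Kern eps c mu nu x y * (expR ((alpha x + beta y) / eps) - 1)
      + (expR s - 1) * \sum_(x | A x) \sum_y plan alpha beta x y.
  rewrite [Z in _ = _ + _ * Z]big_mkcond mulr_sumr -big_split.
  apply: eq_bigr => x _ /=; case: (A x); last by rewrite mulr0 addr0 addr0.
  rewrite mulr_sumr -big_split; apply: eq_bigr => y _ /=.
  have -> : (alpha x + eps * s + beta y) / eps = s + (alpha x + beta y) / eps by field.
  by rewrite expRD /plan; ring.
rewrite linear_part kernel_part; ring.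
Qed.

Lemma plan_row_mass alpha beta (A : pred X) :
  (forall a b, Jeps eps c mu nu a b <= Jeps eps c mu nu alpha beta) ->
  0 < mass mu A -> \sum_(x | A x) \sum_y plan alpha beta x y = mass mu A.
Proof.
move=> Jmax mass_gt0; apply: expR_tilt_eq => //.
  by apply: sumr_ge0 => x _; apply: sumr_ge0 => y _; apply: plan_ge0.
move=> s; have := Jmax (fun x => alpha x + (if A x then eps * s else 0)) beta.
by rewrite Jeps_tilt gerDl pmulr_rle0 // subr_le0.
Qed.

End DualMarginals.

Section Transpose.
Variables (R : realType) (X Y : finType) (eps : R) (c : X -> Y -> R).
Variables (mu : X -> R) (nu : Y -> R).

Let cT (y : Y) (x : X) := c x y.

Lemma Jeps_transpose alpha beta :
  Jeps eps c mu nu alpha beta = Jeps eps cT nu mu beta alpha.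
Proof.
rewrite /Jeps [in RHS]exchange_big [in RHS](addrC (\sum_y _)) /=.
congr (_ - _ * _); apply: eq_bigr => x _; apply: eq_bigr => y _.
by rewrite /Kern /cT (addrC (beta y)); ring.
Qed.

Lemma plan_transpose alpha beta x y :
  plan eps c mu nu alpha beta x y = plan eps cT nu mu beta alpha y x.
Proof. by rewrite /plan /Kern /cT (addrC (beta y)); ring. Qed.

Lemma plan_col_mass alpha beta (B : pred Y) :
  0 < eps -> (forall x, 0 <= mu x) -> (forall y, 0 <= nu y) ->
  (forall a b, Jeps eps c mu nu a b <= Jeps eps c mu nu alpha beta) ->
  0 < mass nu B -> \sum_x \sum_(y | B y) plan eps c mu nu alpha beta x y = mass nu B.
Proof.
move=> eps_gt0 mu_ge0 nu_ge0 Jmax mass_gt0.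
have JmaxT b a : Jeps eps cT nu mu b a <= Jeps eps cT nu mu beta alpha.
  by rewrite -!Jeps_transpose.
rewrite exchange_big -(plan_row_mass eps_gt0 nu_ge0 mu_ge0 JmaxT mass_gt0).
by apply: eq_bigr => y _; apply: eq_bigr => x _; apply: plan_transpose.
Qed.

End Transpose.

Section BalancedWeights.
Variables (R : realType) (I : finType) (M : I -> I -> R).
Hypothesis M_balanced : forall i, \sum_j M i j = \sum_j M j i.

Lemma balanced_sum_sub (g : I -> R) : \sum_i \sum_j M i j * (g i - g j) = 0.
Proof.
under eq_bigr do (under eq_bigr do rewrite mulrBr; rewrite sumrB).
rewrite sumrB [X in _ - X]exchange_big /=; apply/eqP; rewrite subr_eq0; apply/eqP.
by apply: eq_bigr => i _; rewrite -!mulr_suml M_balanced.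
Qed.

Lemma balanced_sum_expR (g : I -> R) :
  \sum_i \sum_j M i j * expR (g i - g j)
  = \sum_i \sum_j M i j + \sum_i \sum_j M i j * (expR (g i - g j) - 1 - (g i - g j)).
Proof.
rewrite -[RHS]addr0 -[X in _ + X](balanced_sum_sub g) -!big_split /=.
by apply: eq_bigr => i _; rewrite -!big_split; apply: eq_bigr => j _ /=; ring.
Qed.

Lemma balanced_sum_le_expR (g : I -> R) : (forall i j, 0 <= M i j) ->
  \sum_i \sum_j M i j <= \sum_i \sum_j M i j * expR (g i - g j).
Proof.
move=> M_ge0; rewrite balanced_sum_expR lerDl.
apply: sumr_ge0 => i _; apply: sumr_ge0 => j _; apply: mulr_ge0 => //.
by have := expR_ge1Dx (g i - g j); lra.
Qed.

Lemma balanced_sum_expR_le_const (g : I -> R) : (forall i j, 0 < M i j) ->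
  \sum_i \sum_j M i j * expR (g i - g j) <= \sum_i \sum_j M i j ->
  forall i j, g i = g j.
Proof.
move=> M_gt0; rewrite balanced_sum_expR gerDl => excess_le0 i j.
have term_ge0 i' j' : 0 <= M i' j' * (expR (g i' - g j') - 1 - (g i' - g j')).
  by apply: mulr_ge0; [exact: ltW | have := expR_ge1Dx (g i' - g j'); lra].
have excess0 : \sum_i \sum_j M i j * (expR (g i - g j) - 1 - (g i - g j)) = 0.
  by apply/eqP; rewrite eq_le excess_le0 sumr_ge0 // => i' _; apply: sumr_ge0.
have row0 := psumr_eq0P (fun i' _ => sumr_ge0 _ (fun j' _ => term_ge0 i' j'))
  excess0 (i := i) isT.
have term0 := psumr_eq0P (fun j' _ => term_ge0 i j') row0 (i := j) isT.
apply/eqP; rewrite -subr_eq0; apply/eqP/expR_eq1Dx.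
by move/eqP: term0; rewrite mulf_eq0 (gt_eqF (M_gt0 i j)) /= => /eqP; lra.
Qed.

End BalancedWeights.

Section Reduction.
Variables (R : realType) (X Y : finType) (eps : R) (c : X -> Y -> R).
Variables (mu : X -> R) (nu : Y -> R) (alpha : X -> R) (beta : Y -> R).
Variables (Rn : nat) (pX : X -> 'I_Rn) (pY : Y -> 'I_Rn) (yr : 'I_Rn -> Y).

Hypothesis eps_gt0 : 0 < eps.
Hypothesis mu_ge0 : forall x, 0 <= mu x.
Hypothesis nu_ge0 : forall y, 0 <= nu y.

Definition block_plan (i j : 'I_Rn) : R :=
  \sum_(x | pX x == i) \sum_(y | pY y == j) plan eps c mu nu alpha beta x y.

Lemma block_plan_gt0 i j :
  0 < mass mu (fun x => pX x == i) -> 0 < mass nu (fun y => pY y == j) ->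
  0 < block_plan i j.
Proof.
move=> /lt0r_neq0/eqP/(psumr_neq0P (fun x _ => mu_ge0 x)) [x /andP[Xx mux]].
move=> /lt0r_neq0/eqP/(psumr_neq0P (fun y _ => nu_ge0 y)) [y /andP[Yy nuy]].
apply: (psumr_gt0 (i := x)) => //.
  by move=> x' _; apply: sumr_ge0 => *; apply: plan_ge0.
apply: (psumr_gt0 (i := y)); [by move=> *; apply: plan_ge0 | by [] |].
exact: plan_gt0.
Qed.

Local Notation d := (dred eps c mu nu pX pY yr alpha beta).

Lemma expR_dred i j : 0 < block_plan i j ->
  expR (- d i j / eps) = expR ((beta (yr i) - beta (yr j)) / eps) * block_plan i j.
Proof.
move=> M_gt0; rewrite /dred !mulNr opprK mulrAC divff ?mul1r ?gt_eqF //.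
set S := (X in ln X).
have -> : S = expR ((beta (yr i) - beta (yr j)) / eps) * block_plan i j.
  rewrite /S /block_plan mulr_sumr; apply: eq_bigr => x _.
  rewrite mulr_sumr; apply: eq_bigr => y _; rewrite /plan /Kern.
  have -> : - (c x y - alpha x - beta (yr i) - beta y + beta (yr j)) / eps
    = (beta (yr i) - beta (yr j)) / eps + (- c x y / eps + (alpha x + beta y) / eps).
    by field; rewrite gt_eqF.
  by rewrite !expRD; ring.
by rewrite lnK // posrE mulr_gt0 ?expR_gt0.
Qed.

Lemma Jhat_dred (b : 'I_Rn -> R) : (forall i j, 0 < block_plan i j) ->
  Jhat eps d b = - eps * \sum_i \sum_j block_plan i j
    * expR ((beta (yr i) - b i) / eps - (beta (yr j) - b j) / eps).
Proof.
move=> M_gt0; rewrite /Jhat; congr (_ * _).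
apply: eq_bigr => i _; apply: eq_bigr => j _.
set t := (beta (yr i) - b i) / eps - (beta (yr j) - b j) / eps.
have -> : - (d i j + b i - b j) / eps
    = - d i j / eps - (beta (yr i) - beta (yr j)) / eps + t.
  by rewrite /t; field; rewrite gt_eqF.
rewrite !expRD expRN expR_dred // [_ * block_plan i j]mulrC.
by rewrite mulfK // gt_eqF ?expR_gt0.
Qed.

Hypothesis Jmax : forall a b, Jeps eps c mu nu a b <= Jeps eps c mu nu alpha beta.

Lemma block_plan_row i : 0 < mass mu (fun x => pX x == i) ->
  \sum_j block_plan i j = mass mu (fun x => pX x == i).
Proof.
move=> mass_gt0; rewrite -(plan_row_mass eps_gt0 mu_ge0 nu_ge0 Jmax mass_gt0).
rewrite exchange_big; apply: eq_bigr => x _.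
by rewrite [RHS](partition_big pY xpredT).
Qed.

Lemma block_plan_col j : 0 < mass nu (fun y => pY y == j) ->
  \sum_i block_plan i j = mass nu (fun y => pY y == j).
Proof.
move=> mass_gt0; rewrite -(plan_col_mass eps_gt0 mu_ge0 nu_ge0 Jmax mass_gt0).
by rewrite [RHS](partition_big pX xpredT).
Qed.

End Reduction.

Theorem mainTheorem8 (R : realType) (X Y : finType)
  (mu : X -> R) (nu : Y -> R) (c : X -> Y -> R) (eps : R)
  (Rn : nat) (pX : X -> 'I_Rn) (pY : Y -> 'I_Rn) (yr : 'I_Rn -> Y)
  (alpha : X -> R) (beta : Y -> R) :
  (forall x, 0 <= mu x) -> \sum_x mu x = 1 ->
  (forall y, 0 <= nu y) -> \sum_y nu y = 1 ->
  (forall x y, 0 <= c x y) ->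
  0 < eps ->
  (forall i, mass mu (fun x => pX x == i) = mass nu (fun y => pY y == i)) ->
  (forall i, 0 < mass mu (fun x => pX x == i)) ->
  (forall i, pY (yr i) = i) ->
  (forall a b, Jeps eps c mu nu a b <= Jeps eps c mu nu alpha beta) ->
  let d := dred eps c mu nu pX pY yr alpha beta in
  let bh := fun i => beta (yr i) in
  (forall b, Jhat eps d b <= Jhat eps d bh) /\
  (forall b', (forall b, Jhat eps d b <= Jhat eps d b') ->
     exists k : R, forall i, b' i = bh i + k).
Proof.
move=> mu_ge0 _ nu_ge0 _ _ eps_gt0 mass_eq mass_gt0 _ Jmax d bh.
set M := block_plan eps c mu nu alpha beta pX pY.
have M_gt0 i j : 0 < M i j by apply: block_plan_gt0; rewrite // -mass_eq.
have M_balanced i : \sum_j M i j = \sum_j M j i.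
  by rewrite block_plan_row // block_plan_col -?mass_eq.
pose g (b : 'I_Rn -> R) i := (beta (yr i) - b i) / eps.
have Jhat_g b : Jhat eps d b = - eps * \sum_i \sum_j M i j * expR (g b i - g b j).
  exact: Jhat_dred.
have Jhat_bh : Jhat eps d bh = - eps * \sum_i \sum_j M i j.
  rewrite Jhat_g; congr (_ * _); apply: eq_bigr => i _; apply: eq_bigr => j _.
  by rewrite /g /bh /= !subrr ?mul0r ?subr0 expR0 mulr1.
have eps_lt0 : - eps < 0 by rewrite oppr_lt0.
split => [b | b' b'_max].
  rewrite Jhat_bh Jhat_g ler_nM2l //.
  by apply: balanced_sum_le_expR => // i j; apply: ltW.
have := b'_max bh; rewrite Jhat_bh Jhat_g ler_nM2l //.
move=> /(balanced_sum_expR_le_const M_balanced M_gt0) g_const.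
have [i0 _ | no_index] := pickP (fun _ : 'I_Rn => true); last first.
  by exists 0 => i; have := no_index i.
exists (b' i0 - bh i0) => i.
have /(mulIf (invr_neq0 (lt0r_neq0 eps_gt0))) := g_const i i0.
rewrite /bh; lra.
Qed.
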